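(* Let $p,d\ge 1$ be integers, let $C_0,\dots,C_{p-1}\in\mathbb{R}^{d\times d}$, and let $M\in\mathbb{R}^{pd\times pd}$ be the block companion matrix whose block rows $i=1,\dots,p-1$ have $I_d$ in block column $i+1$ and zeros elsewhere, and whose last block row is $(C_0,C_1,\dots,C_{p-1})$. Suppose there is an invertible $Q\in\mathbb{R}^{d\times d}$ such that $T_i:=Q^{-1}C_iQ$ is upper triangular for each $i$. Then the set of eigenvalues of $M$ equals $$\bigcup_{j=1}^d\left\{\lambda\in\mathbb{C}:\ \lambda^p-\sum_{k=0}^{p-1}\lambda^k (T_k)_{j,j}=0\right\}.$$
   Context: The diagonal entries $(T_k)_{1,1},\dots,(T_k)_{d,d}$ are the eigenvalues of $C_k$ listed in the order induced by $Q$. *)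

From HB Require Import structures.
From mathcomp Require Import all_boot all_order all_algebra.
From mathcomp Require Import complex.
From mathcomp Require Import reals.
Set Implicit Arguments. Unset Strict Implicit. Unset Printing Implicit Defensive.
Import Order.TTheory GRing.Theory Num.Theory.
Local Open Scope ring_scope.

Lemma blk_proof (p d : nat) (a : 'I_(p * d)) : (a %/ d < p)%N.
Proof.
case: d a => [|d] a; first by case: a => a; rewrite muln0.
by rewrite ltn_divLR // ltn_ord.
Qed.

Lemma off_proof (p d : nat) (a : 'I_(p * d)) : (a %% d < d)%N.
Proof.
case: d a => [|d] a; first by case: a => a; rewrite muln0.
by rewrite ltn_pmod.
Qed.

Definition blk (p d : nat) (a : 'I_(p * d)) : 'I_p := Ordinal (blk_proof a).
Definition off (p d : nat) (a : 'I_(p * d)) : 'I_d := Ordinal (off_proof a).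

(* Block companion matrix (0-based blocks): block row i < p-1 has I_d in
   block column i+1 and zeros elsewhere; the last block row is
   (C_0, C_1, ..., C_{p-1}). *)
Definition block_companion (R : pzRingType) (p d : nat) (C : 'I_p -> 'M[R]_d)
  : 'M[R]_(p * d) :=
  \matrix_(a, b)
    if ((blk a).+1 < p)%N then
      ((nat_of_ord (blk b) == (blk a).+1) && (off a == off b))%:R
    else C (blk b) (off a) (off b).

Definition upper_triangular (R : pzRingType) (d : nat) (T : 'M[R]_d) : Prop :=
  forall i j : 'I_d, (j < i)%N -> T i j = 0.

From HB Require Import structures.
From mathcomp Require Import all_boot all_order all_algebra.
From mathcomp Require Import complex.
From mathcomp Require Import reals.
From mathcomp Require Import zify.
Import Order.TTheory GRing.Theory Num.Theory.
Local Open Scope ring_scope.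
Set Implicit Arguments. Unset Strict Implicit.

(* If M x = lam x, the block rows above the last one force the k-th block of
   x to be lam^k x0, where x0 is the first block; the last block row then says
   exactly P(lam) x0 = 0 for P(lam) = lam^p I - sum_k lam^k C_k. Hence the
   eigenvalues of M are the roots of det P(lam), and conjugating by Q makes
   P(lam) upper triangular with diagonal entries lam^p - sum_k lam^k (T_k)_jj,
   so det P(lam) is their product. *)

Lemma det0_colP (R : idomainType) n (A : 'M[R]_n) :
  reflect (exists2 x : 'cV_n, x != 0 & A *m x = 0) (\det A == 0).
Proof.
rewrite -det_tr; apply: (iffP det0P) => -[v nz_v vA0]; exists v^T.
- by rewrite trmx_eq0.
- by rewrite -[A]trmxK -trmx_mul vA0 trmx0.
- by rewrite trmx_eq0.
- by rewrite -trmx_mul vA0 trmx0.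
Qed.

Lemma eigenvalue_colP (F : fieldType) n (g : 'M[F]_n) a :
  reflect (exists2 x : 'cV_n, x != 0 & g *m x = a *: x) (eigenvalue g a).
Proof.
have -> : eigenvalue g a = (\det (g - a%:M) == 0).
  by rewrite /eigenvalue /eigenspace kermx_eq0 row_free_unit unitmxE unitfE negbK.
apply: (iffP (det0_colP _)) => -[x nz_x gx]; exists x => //.
  by apply/eqP; rewrite -subr_eq0 -mul_scalar_mx -mulmxBl gx.
by rewrite mulmxBl gx mul_scalar_mx subrr.
Qed.

Lemma det_conj_invmx (R : comUnitRingType) n (Q A : 'M[R]_n) :
  Q \in unitmx -> \det (invmx Q *m A *m Q) = \det A.
Proof.
rewrite unitmxE => uQ.
by rewrite !det_mulmx det_inv mulrAC mulVr ?mul1r.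
Qed.

Lemma det_upper_triangular (R : comPzRingType) n (A : 'M[R]_n) :
  upper_triangular A -> \det A = \prod_(i < n) A i i.
Proof.
move=> trigA; rewrite -det_tr det_trig; first by under eq_bigr do rewrite mxE.
by apply/is_trig_mxP => i j lt_ij; rewrite mxE trigA.
Qed.

Section BlockIndex.
Variables p d : nat.

Lemma blkoff_proof (k : 'I_p) (j : 'I_d) : (k * d + j < p * d)%N.
Proof.
apply: (@leq_trans (k * d + d)); first by rewrite ltn_add2l.
by rewrite -mulSnr leq_mul2r ltn_ord orbT.
Qed.

Definition blkoff (k : 'I_p) (j : 'I_d) : 'I_(p * d) := Ordinal (blkoff_proof k j).

Lemma blk_blkoff k j : blk (blkoff k j) = k.
Proof.
have d_gt0 : (0 < d)%N by case: d j => [[]|].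
by apply: val_inj; rewrite /= divnMDl // divn_small ?addn0.
Qed.

Lemma off_blkoff k j : off (blkoff k j) = j.
Proof. by apply: val_inj; rewrite /= modnMDl modn_small. Qed.

Lemma blkoffK a : blkoff (blk a) (off a) = a.
Proof. by apply: val_inj; rewrite /= -divn_eq. Qed.

Lemma sum_blkoff (V : nmodType) (F : 'I_(p * d) -> V) :
  \sum_a F a = \sum_(k < p) \sum_(j < d) F (blkoff k j).
Proof.
rewrite pair_big /= (reindex (fun u : 'I_p * 'I_d => blkoff u.1 u.2)) //.
exists (fun a => (blk a, off a)) => [[k j] _ | a _]; last exact: blkoffK.
by rewrite /= blk_blkoff off_blkoff.
Qed.

End BlockIndex.

Definition companion_polymx (R : pzRingType) p d (C : 'I_p -> 'M[R]_d) (lam : R)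
  : 'M[R]_d :=
  (lam ^+ p)%:M - \sum_(k < p) lam ^+ k *: C k.

Definition companion_col (R : pzRingType) p d (lam : R) (x0 : 'cV[R]_d)
  : 'cV[R]_(p * d) :=
  \col_a (lam ^+ blk a * x0 (off a) 0).

Section BlockCompanion.
Variables (R : comPzRingType) (p d : nat) (C : 'I_p -> 'M[R]_d) (lam : R).
Hypothesis p_gt0 : (0 < p)%N.
Let M := block_companion C.

Lemma blk_last (a : 'I_(p * d)) :
  ~~ ((blk a).+1 < p)%N -> nat_of_ord (blk a) = p.-1.
Proof. by rewrite -leqNgt => le_p_blk; have := ltn_ord (blk a); lia. Qed.

Lemma block_companion_mul_shift (x : 'cV_(p * d)) a
    (lt_blk : ((blk a).+1 < p)%N) :
  (M *m x) a 0 = x (blkoff (Ordinal lt_blk) (off a)) 0.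
Proof.
have entry k j : M a (blkoff k j) = ((nat_of_ord k == (blk a).+1) && (off a == j))%:R.
  by rewrite /M mxE blk_blkoff off_blkoff lt_blk.
rewrite mxE sum_blkoff (bigD1 (Ordinal lt_blk)) //=.
rewrite [X in _ + X]big1 => [|k ne_k]; last first.
  apply: big1 => j _; rewrite entry (_ : nat_of_ord k == _ = false) ?mul0r //.
  by apply: contraNF ne_k => /eqP k_eq; apply/eqP/val_inj.
rewrite addr0 (bigD1 (off a)) //= [X in _ + X]big1 => [|j ne_j]; last first.
  by rewrite entry eqxx eq_sym (negPf ne_j) mul0r.
by rewrite addr0 entry !eqxx mul1r.
Qed.

Lemma block_companion_mul_last (x : 'cV_(p * d)) a : ~~ ((blk a).+1 < p)%N ->
  (M *m x) a 0 = \sum_(k < p) \sum_(j < d) C k (off a) j * x (blkoff k j) 0.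
Proof.
move=> /negPf last_a; rewrite mxE sum_blkoff.
apply: eq_bigr => k _; apply: eq_bigr => j _.
by rewrite mxE blk_blkoff off_blkoff last_a.
Qed.

Lemma companion_polymx_mul (x0 : 'cV_d) i :
  (companion_polymx C lam *m x0) i 0 =
  lam ^+ p * x0 i 0 - \sum_(k < p) lam ^+ k * \sum_(j < d) C k i j * x0 j 0.
Proof.
rewrite mulmxBl mul_scalar_mx mulmx_suml !mxE summxE; congr (_ - _).
by apply: eq_bigr => k _; rewrite -scalemxAl !mxE.
Qed.

Lemma block_companion_eigenvectorE (x : 'cV_(p * d)) : M *m x = lam *: x ->
  x = companion_col p lam (\col_j x (blkoff (Ordinal p_gt0) j) 0).
Proof.
move=> Mx; have shift k (lt_k : (k.+1 < p)%N) j :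
    x (blkoff (Ordinal lt_k) j) 0 = lam * x (blkoff (Ordinal (ltnW lt_k)) j) 0.
  have lt_blk : ((blk (blkoff (Ordinal (ltnW lt_k)) j)).+1 < p)%N by rewrite blk_blkoff.
  have := block_companion_mul_shift x lt_blk; rewrite Mx mxE off_blkoff => ->.
  by congr (x (blkoff _ j) 0); apply/val_inj/(congr1 S); rewrite blk_blkoff.
apply/matrixP => a b; rewrite ord1 -[a]blkoffK !mxE blk_blkoff off_blkoff.
case: (blk a) (off a) => k lt_k j; elim: k lt_k => [|k IHk] lt_k.
  by rewrite expr0 mul1r; congr (x (blkoff _ _) 0); apply: val_inj.
by rewrite shift IHk exprS mulrA.
Qed.

Lemma companion_col_eq0 (x0 : 'cV_d) : (companion_col p lam x0 == 0) = (x0 == 0).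
Proof.
apply/eqP/eqP => [x_eq0 | ->]; last by apply/matrixP => a b; rewrite !mxE mulr0.
apply/matrixP => j b; rewrite ord1.
have := congr1 (fun y : 'cV_(p * d) => y (blkoff (Ordinal p_gt0) j) 0) x_eq0.
by rewrite !mxE blk_blkoff off_blkoff expr0 mul1r.
Qed.

Lemma block_companion_mul_companion_col (x0 : 'cV_d) :
  (M *m companion_col p lam x0 == lam *: companion_col p lam x0) =
  (companion_polymx C lam *m x0 == 0).
Proof.
have sum_col i :
    \sum_(k < p) \sum_(j < d) C k i j * companion_col p lam x0 (blkoff k j) 0
    = \sum_(k < p) lam ^+ k * \sum_(j < d) C k i j * x0 j 0.
  apply: eq_bigr => k _; rewrite mulr_sumr; apply: eq_bigr => j _.
  by rewrite mxE blk_blkoff off_blkoff mulrCA.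
have lam_col a : ~~ ((blk a).+1 < p)%N ->
    (lam *: companion_col p lam x0) a 0 = lam ^+ p * x0 (off a) 0.
  by move=> /blk_last last_a; rewrite !mxE last_a mulrA -exprS prednK.
apply/eqP/eqP => [Mx | Px0]; apply/matrixP => i b; rewrite ord1.
  have lt_last : (p.-1 < p)%N by rewrite ltn_predL.
  have last_a : ~~ ((blk (blkoff (Ordinal lt_last) i)).+1 < p)%N.
    by rewrite blk_blkoff /= prednK ?ltnn.
  have := congr1 (fun y : 'cV_(p * d) => y (blkoff (Ordinal lt_last) i) 0) Mx.
  rewrite block_companion_mul_last // lam_col // sum_col off_blkoff => Mx_i.
  by rewrite companion_polymx_mul Mx_i subrr mxE.
have [lt_blk | last_a] := boolP ((blk i).+1 < p)%N.
  by rewrite block_companion_mul_shift !mxE blk_blkoff off_blkoff exprS mulrA.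
rewrite block_companion_mul_last // lam_col // sum_col.
by apply/eqP; rewrite eq_sym -subr_eq0 -companion_polymx_mul Px0 mxE.
Qed.

End BlockCompanion.

Lemma eigenvalue_block_companion (F : fieldType) p d (C : 'I_p -> 'M[F]_d) lam :
  (0 < p)%N ->
  eigenvalue (block_companion C) lam = (\det (companion_polymx C lam) == 0).
Proof.
move=> p_gt0; apply/eigenvalue_colP/det0_colP => [[x nz_x Mx] | [x0 nz_x0 Px0]].
  have xE := block_companion_eigenvectorE p_gt0 Mx.
  set x0 := \col_j _ in xE; exists x0.
    by rewrite -(companion_col_eq0 lam p_gt0) -xE.
  by apply/eqP; rewrite -block_companion_mul_companion_col // -xE Mx.
exists (companion_col p lam x0); first by rewrite companion_col_eq0.
by apply/eqP; rewrite block_companion_mul_companion_col // Px0.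
Qed.

Lemma companion_polymxE (R : pzRingType) p d (C : 'I_p -> 'M[R]_d) lam i j :
  companion_polymx C lam i j = lam ^+ p *+ (i == j) - \sum_(k < p) lam ^+ k * C k i j.
Proof. by rewrite !mxE summxE; under eq_bigr do rewrite mxE. Qed.

Lemma companion_polymx_conj (R : comUnitRingType) p d
    (C : 'I_p -> 'M[R]_d) Q lam :
  Q \in unitmx ->
  invmx Q *m companion_polymx C lam *m Q =
  companion_polymx (fun k => invmx Q *m C k *m Q) lam.
Proof.
move=> uQ; rewrite mulmxBr mulmxBl mul_mx_scalar -scalemxAl mulVmx // scalemx1.
congr (_ - _); rewrite mulmx_sumr mulmx_suml; apply: eq_bigr => k _.
by rewrite -scalemxAr -scalemxAl.
Qed.

Lemma upper_triangular_companion_polymx (R : pzRingType) p d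
    (C : 'I_p -> 'M[R]_d) lam :
  (forall k, upper_triangular (C k)) -> upper_triangular (companion_polymx C lam).
Proof.
move=> trigC i j lt_ji; rewrite companion_polymxE big1 => [|k _].
  by rewrite -val_eqE eq_sym (ltn_eqF lt_ji) subr0.
by rewrite trigC ?mulr0.
Qed.

Lemma det_companion_polymx_triangularizable (R : comUnitRingType) p d
    (C : 'I_p -> 'M[R]_d) Q lam :
  Q \in unitmx -> (forall k, upper_triangular (invmx Q *m C k *m Q)) ->
  \det (companion_polymx C lam) =
  \prod_(j < d) (lam ^+ p - \sum_(k < p) lam ^+ k * (invmx Q *m C k *m Q) j j).
Proof.
move=> uQ trigT; rewrite -(det_conj_invmx _ uQ) companion_polymx_conj //.
rewrite det_upper_triangular; last exact: upper_triangular_companion_polymx.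
by apply: eq_bigr => j _; rewrite companion_polymxE eqxx mulr1n.
Qed.

Lemma map_block_companion (R S : pzRingType) (f : {rmorphism R -> S}) p d
    (C : 'I_p -> 'M[R]_d) :
  map_mx f (block_companion C) = block_companion (fun k => map_mx f (C k)).
Proof. by apply/matrixP => a b; rewrite !mxE; case: ifP; rewrite ?rmorph_nat ?mxE. Qed.

Local Open Scope complex_scope.

Theorem corollary2p7 (R : realType) (p d : nat) (hp : (0 < p)%N) (hd : (0 < d)%N)
  (C : 'I_p -> 'M[R]_d) (Q : 'M[R]_d) (hQ : Q \in unitmx)
  (hT : forall k : 'I_p, upper_triangular (invmx Q *m C k *m Q)) :
  forall lambda : R[i],
    eigenvalue (map_mx (real_complex R) (block_companion C)) lambda <->
    exists j : 'I_d,
      lambda ^+ p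
      - \sum_(k < p) lambda ^+ k * ((invmx Q *m C k *m Q) j j)%:C = 0.
Proof.
move=> lam; set f := real_complex R.
have mapT k : invmx (map_mx f Q) *m map_mx f (C k) *m map_mx f Q
    = map_mx f (invmx Q *m C k *m Q) by rewrite !map_mxM map_invmx.
have uQf : map_mx f Q \in unitmx by rewrite map_unitmx.
have trigTf k : upper_triangular (invmx (map_mx f Q) *m map_mx f (C k) *m map_mx f Q).
  by move=> i j lt_ji; rewrite mapT mxE hT.
rewrite map_block_companion eigenvalue_block_companion //.
rewrite (det_companion_polymx_triangularizable _ uQf trigTf).
under eq_bigr do under eq_bigr do rewrite mapT mxE.
split => [/prodf_eq0[j _ /eqP Pj0] | [j /eqP Pj0]]; first by exists j.
by apply/prodf_eq0; exists j.
Qed.
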